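(* Let $k$ be a field of characteristic $0$ containing a primitive fifth root of unity. For $\underline{a}=(a_1,\ldots,a_7)\in k^7$ let $$F_{\underline{a}}=a_1x_0^3 + a_2x_0x_1x_4 + a_3x_0x_2x_3 + a_4x_1^2x_3 + a_5x_1x_2^2 + a_6x_2x_4^2+a_7x_3^2x_4 .$$ Define $$\begin{aligned}\Delta(\underline{a}):=\;& a^4_2 a^5_3 a_4 a_6 + 8 a_1 a^2_2 a^4_3 a^2_4 a^2_6 + 16 a^2_1 a^3_3 a^3_4 a^3_6 + a^5_2 a^4_3 a_5 a_7 + 15 a_1 a^3_2 a^3_3 a_4 a_5 a_6 a_7\\ &+ 12 a^2_1 a_2 a^2_3 a^2_4 a_5 a^2_6 a_7 + 8 a_1 a^4_2 a^2_3 a^2_5 a^2_7 + 12 a^2_1 a^2_2 a_3 a_4 a^2_5 a_6 a^2_7 + 27 a^3_1 a^2_4 a^2_5 a^2_6 a^2_7 + 16 a^2_1 a^3_2 a^3_5 a^3_7\end{aligned}$$ and $D(\underline{a})=a_1a_4a_5a_6a_7\,\Delta(\underline{a})$. Then the equation $F_{\underline{a}}=0$ defines a smooth cubic threefold in $\mathbb{P}^4$ if and only if $D(\underline{a})\neq 0$.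
   Context: $(x_0:\ldots:x_4)$ are homogeneous coordinates on $\mathbb{P}^4$. *)

From HB Require Import structures.
From mathcomp Require Import all_boot all_order all_algebra.
From mathcomp Require Import mpoly.
Set Implicit Arguments. Unset Strict Implicit. Unset Printing Implicit Defensive.
Import GRing.Theory.
Local Open Scope ring_scope.

Definition Xv {k : fieldType} (i : 'I_5) : {mpoly k[5]} := 'X_i.

Definition Fa {k : fieldType} (a1 a2 a3 a4 a5 a6 a7 : k) : {mpoly k[5]} :=
  let x0 := Xv (@inord 4 0) in let x1 := Xv (@inord 4 1) in
  let x2 := Xv (@inord 4 2) in let x3 := Xv (@inord 4 3) in
  let x4 := Xv (@inord 4 4) in
  a1 *: (x0 ^+ 3) + a2 *: (x0 * x1 * x4) + a3 *: (x0 * x2 * x3)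
  + a4 *: (x1 ^+ 2 * x3) + a5 *: (x1 * x2 ^+ 2) + a6 *: (x2 * x4 ^+ 2)
  + a7 *: (x3 ^+ 2 * x4).

Definition Delta {k : fieldType} (a1 a2 a3 a4 a5 a6 a7 : k) : k :=
  a2^+4 * a3^+5 * a4 * a6 + 8%:R * a1 * a2^+2 * a3^+4 * a4^+2 * a6^+2
  + 16%:R * a1^+2 * a3^+3 * a4^+3 * a6^+3 + a2^+5 * a3^+4 * a5 * a7
  + 15%:R * a1 * a2^+3 * a3^+3 * a4 * a5 * a6 * a7
  + 12%:R * a1^+2 * a2 * a3^+2 * a4^+2 * a5 * a6^+2 * a7
  + 8%:R * a1 * a2^+4 * a3^+2 * a5^+2 * a7^+2
  + 12%:R * a1^+2 * a2^+2 * a3 * a4 * a5^+2 * a6 * a7^+2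
  + 27%:R * a1^+3 * a4^+2 * a5^+2 * a6^+2 * a7^+2
  + 16%:R * a1^+2 * a2^+3 * a5^+3 * a7^+3.

Definition Dd {k : fieldType} (a1 a2 a3 a4 a5 a6 a7 : k) : k :=
  a1 * a4 * a5 * a6 * a7 * Delta a1 a2 a3 a4 a5 a6 a7.

Definition singular_point {k : fieldType} (L : fieldType) (f : {rmorphism k -> L})
    (F : {mpoly k[5]}) (x : 'I_5 -> L) : Prop :=
  (exists i, x i != 0) /\ (map_mpoly f F).@[x] = 0 /\
  forall i : 'I_5, (map_mpoly f (F^`M(i))).@[x] = 0.

(* V(F) subset P^4 is a smooth hypersurface: no singular point over any
   algebraically closed extension of k (i.e. geometrically smooth). *)
Definition smooth_hypersurface {k : fieldType} (F : {mpoly k[5]}) : Prop :=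
  forall (L : closedFieldType) (f : {rmorphism k -> L}) (x : 'I_5 -> L),
    ~ singular_point f F x.

From HB Require Import structures.
From mathcomp Require Import all_boot all_order all_algebra.
From mathcomp Require Import mpoly.
From mathcomp Require Import boolp classical_sets filter.
From mathcomp Require Import closed_field generic_quotient.
From mathcomp Require Import ring.
Set Implicit Arguments. Unset Strict Implicit. Unset Printing Implicit Defensive.
Import GRing.Theory.
Local Open Scope ring_scope.

(* Smoothness is tested over every algebraically closed extension of k; for
   an arbitrary field such an extension is obtained as an ultraproduct of
   algebraic closures of the finitely generated subfields of k.

   If one of a1, a4, a5, a6, a7 vanishes, a coordinate point is singular.
   Otherwise a singular point cannot lie on x0 = 0, and in the chart x0 = 1
   suitable combinations of the partial derivatives show that U = x1 x4 and
   V = x2 x3 satisfy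
     a4 a6 U^2 V = (a1 + a2 U)^2,  a5 a7 U V^2 = (a1 + a3 V)^2,
     3 a1 + a2 U + a3 V = 0;
   conversely every solution lifts to a singular point by extracting a fifth
   root.  Eliminating U and V amounts to a resultant of two cubics in
   P = -(a1 + a2 U), computed through the symmetric functions of the roots of
   one of them; it equals Delta(a) up to nonzero factors. *)

(* Values of field expressions in the entries of a list s: the subfield
   generated by s, which is thus countable. *)
Inductive fexpr :=
  | FVar of nat | FZero | FOne | FAdd of fexpr & fexpr | FMul of fexpr & fexpr
  | FOpp of fexpr | FInv of fexpr.

Fixpoint tree_of_fexpr (e : fexpr) : GenTree.tree nat :=
  match e with
  | FVar n => GenTree.Leaf n
  | FZero => GenTree.Node 0 [::]
  | FOne => GenTree.Node 1 [::]
  | FAdd a b => GenTree.Node 2 [:: tree_of_fexpr a; tree_of_fexpr b]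
  | FMul a b => GenTree.Node 3 [:: tree_of_fexpr a; tree_of_fexpr b]
  | FOpp a => GenTree.Node 4 [:: tree_of_fexpr a]
  | FInv a => GenTree.Node 5 [:: tree_of_fexpr a]
  end.

Fixpoint fexpr_of_tree (t : GenTree.tree nat) : option fexpr :=
  match t with
  | GenTree.Leaf n => Some (FVar n)
  | GenTree.Node 0 [::] => Some FZero
  | GenTree.Node 1 [::] => Some FOne
  | GenTree.Node 2 [:: a; b] =>
      if (fexpr_of_tree a, fexpr_of_tree b) is (Some x, Some y) then Some (FAdd x y) else None
  | GenTree.Node 3 [:: a; b] =>
      if (fexpr_of_tree a, fexpr_of_tree b) is (Some x, Some y) then Some (FMul x y) else None
  | GenTree.Node 4 [:: a] => omap FOpp (fexpr_of_tree a)
  | GenTree.Node 5 [:: a] => omap FInv (fexpr_of_tree a)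
  | _ => None
  end.

Lemma tree_of_fexprK : pcancel tree_of_fexpr fexpr_of_tree.
Proof. by elim => //= [a -> b ->|a -> b ->|a ->|a ->]. Qed.

HB.instance Definition _ := Countable.copy fexpr (pcan_type tree_of_fexprK).

Section GeneratedSubfield.
Variables (k : fieldType) (s : seq k).

Fixpoint fexpr_eval (e : fexpr) : k :=
  match e with
  | FVar i => s`_i | FZero => 0 | FOne => 1
  | FAdd a b => fexpr_eval a + fexpr_eval b | FMul a b => fexpr_eval a * fexpr_eval b
  | FOpp a => - fexpr_eval a | FInv a => (fexpr_eval a)^-1
  end.

Definition field_gen : {pred k} := fun x => `[< exists e, fexpr_eval e = x >].

Lemma field_gen_divring_closed : divring_closed field_gen.
Proof.
split; first by apply/asboolP; exists FOne.
- by move=> _ _ /asboolP[a <-] /asboolP[b <-]; apply/asboolP; exists (FAdd a (FOpp b)).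
- by move=> _ _ /asboolP[a <-] /asboolP[b <-]; apply/asboolP; exists (FMul a (FInv b)).
Qed.

HB.instance Definition _ :=
  GRing.isDivringClosed.Build k field_gen field_gen_divring_closed.

Lemma mem_field_gen x : x \in s -> x \in field_gen.
Proof. by move=> xs; apply/asboolP; exists (FVar (index x s)); rewrite /= nth_index. Qed.

Definition gen_subfield := {x : k | x \in field_gen}.
HB.instance Definition _ := [isSub of gen_subfield for @sval k (fun x => x \in field_gen)].
HB.instance Definition _ := [Choice of gen_subfield by <:].
HB.instance Definition _ := [SubChoice_isSubComUnitRing of gen_subfield by <:].
HB.instance Definition _ := [SubComUnitRing_isSubIntegralDomain of gen_subfield by <:].
HB.instance Definition _ := [SubIntegralDomain_isSubField of gen_subfield by <:].

Lemma gen_subfield_expr (x : gen_subfield) : exists e, fexpr_eval e == val x.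
Proof. by have /asboolP[e <-] := valP x; exists e. Qed.

Definition fexpr_of_gen (x : gen_subfield) : fexpr := xchoose (gen_subfield_expr x).

Lemma fexpr_of_genK : pcancel fexpr_of_gen (fun e => insub (fexpr_eval e)).
Proof. by move=> x; rewrite /fexpr_of_gen (eqP (xchooseP (gen_subfield_expr x))) valK. Qed.

HB.instance Definition _ := Countable.copy gen_subfield (pcan_type fexpr_of_genK).
End GeneratedSubfield.

Section Ultraproduct.
Variable k : fieldType.
Local Open Scope classical_set_scope.
Local Open Scope quotient_scope.

Definition closure_gen (s : seq k) : closedFieldType :=
  projT1 (countable_algebraic_closure (gen_subfield s)).

Definition closure_gen_embedding (s : seq k) :
  {rmorphism gen_subfield s -> closure_gen s} :=
  proj1_sig (projT2 (countable_algebraic_closure (gen_subfield s))).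

Definition superset_filter : set_system (seq k) :=
  fun A => exists s0 : seq k, forall s, {subset s0 <= s} -> A s.

Lemma superset_filter_proper : ProperFilter superset_filter.
Proof.
split; first by move=> [s0 A0]; apply: (A0 s0).
split; first by exists [::].
- move=> A B [s1 A1] [s2 B2]; exists (s1 ++ s2) => s sub; split.
    by apply: A1 => x x1; apply: sub; rewrite mem_cat x1.
  by apply: B2 => x x2; apply: sub; rewrite mem_cat x2 orbT.
- by move=> P Q PQ [s0 P0]; exists s0 => s sub; apply/PQ/P0.
Qed.

Definition ultra_sig := cid (ultraFilterLemma superset_filter_proper).
Definition ultra : set_system (seq k) := proj1_sig ultra_sig.
#[local] Instance ultra_ultrafilter : UltraFilter ultra := (proj2_sig ultra_sig).1.

Lemma ultra_superset (s0 : seq k) (A : set (seq k)) :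
  (forall s, {subset s0 <= s} -> A s) -> ultra A.
Proof. by move=> A0; apply: (proj2_sig ultra_sig).2; exists s0. Qed.

Definition uprod := forall s : seq k, closure_gen s.
HB.instance Definition _ := gen_eqMixin uprod.
HB.instance Definition _ := gen_choiceMixin uprod.

Definition uprod_add (x y : uprod) : uprod := fun s => x s + y s.
Definition uprod_opp (x : uprod) : uprod := fun s => - x s.
Definition uprod_mul (x y : uprod) : uprod := fun s => x s * y s.
Definition uprod_inv (x : uprod) : uprod := fun s => (x s)^-1.

Local Ltac pointwise := move=> *; apply: functional_extensionality_dep => s.

Lemma uprod_addA : associative uprod_add. Proof. by pointwise; apply: addrA. Qed.
Lemma uprod_addC : commutative uprod_add. Proof. by pointwise; apply: addrC. Qed.
Lemma uprod_add0 : left_id (fun=> 0) uprod_add. Proof. by pointwise; apply: add0r. Qed.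
Lemma uprod_addN : left_inverse (fun=> 0) uprod_opp uprod_add.
Proof. by pointwise; apply: addNr. Qed.
HB.instance Definition _ :=
  GRing.isZmodule.Build uprod uprod_addA uprod_addC uprod_add0 uprod_addN.

Lemma uprod_mulA : associative uprod_mul. Proof. by pointwise; apply: mulrA. Qed.
Lemma uprod_mulC : commutative uprod_mul. Proof. by pointwise; apply: mulrC. Qed.
Lemma uprod_mul1 : left_id (fun=> 1) uprod_mul. Proof. by pointwise; apply: mul1r. Qed.
Lemma uprod_mulDl : left_distributive uprod_mul +%R. Proof. by pointwise; apply: mulrDl. Qed.
HB.instance Definition _ :=
  GRing.Zmodule_isComPzRing.Build uprod uprod_mulA uprod_mulC uprod_mul1 uprod_mulDl.

Lemma uprodD (x y : uprod) s : (x + y) s = x s + y s. Proof. by []. Qed.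
Lemma uprodN (x : uprod) s : (- x) s = - x s. Proof. by []. Qed.
Lemma uprodM (x y : uprod) s : (x * y) s = x s * y s. Proof. by []. Qed.

Definition uproj (s : seq k) (x : uprod) : closure_gen s := x s.
Lemma uproj_zmod s : zmod_morphism (uproj s). Proof. by []. Qed.
Lemma uproj_monoid s : monoid_morphism (uproj s). Proof. by []. Qed.
HB.instance Definition _ s :=
  GRing.isZmodMorphism.Build uprod (closure_gen s) (uproj s) (uproj_zmod s).
HB.instance Definition _ s :=
  GRing.isMonoidMorphism.Build uprod (closure_gen s) (uproj s) (uproj_monoid s).

Definition ueq (x y : uprod) : bool := `[< ultra [set s | x s = y s] >].

Lemma ueq_refl : reflexive ueq. Proof. by move=> x; apply/asboolP; apply: filterE. Qed.
Lemma ueq_sym : ssrbool.symmetric ueq.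
Proof. by move=> x y; apply/asboolP/asboolP; apply: filterS => s /=. Qed.
Lemma ueq_trans : transitive ueq.
Proof.
move=> y x z /asboolP xy /asboolP yz; apply/asboolP.
by apply: filterS2 xy yz => s /= -> ->.
Qed.

Canonical ueq_equiv := EquivRel ueq ueq_refl ueq_sym ueq_trans.
Definition ultraproduct := {eq_quot ueq_equiv}.
HB.instance Definition _ := Choice.copy ultraproduct {eq_quot ueq_equiv}.

Notation pi := (\pi_ultraproduct).

Lemma eq_pi (x y : uprod) : (pi x = pi y) <-> ultra [set s | x s = y s].
Proof. by split=> [/eqmodP/asboolP|xy]; last by apply/eqmodP/asboolP. Qed.

Lemma repr_pi (x : uprod) : ultra [set s | repr (pi x) s = x s].
Proof. by apply/eq_pi; rewrite reprK. Qed.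

Definition ult_add (a b : ultraproduct) : ultraproduct := pi (repr a + repr b).
Definition ult_opp (a : ultraproduct) : ultraproduct := pi (- repr a).
Definition ult_mul (a b : ultraproduct) : ultraproduct := pi (repr a * repr b).
Definition ult_inv (a : ultraproduct) : ultraproduct := pi (uprod_inv (repr a)).

Lemma pi_add x y : pi (x + y) = ult_add (pi x) (pi y).
Proof.
by apply/eq_pi; apply: filterS2 (repr_pi x) (repr_pi y) => s /= xs ys; rewrite !uprodD xs ys.
Qed.

Lemma pi_opp x : pi (- x) = ult_opp (pi x).
Proof. by apply/eq_pi; apply: filterS (repr_pi x) => s /= xs; rewrite !uprodN xs. Qed.

Lemma pi_mul x y : pi (x * y) = ult_mul (pi x) (pi y).
Proof.
by apply/eq_pi; apply: filterS2 (repr_pi x) (repr_pi y) => s /= xs ys; rewrite !uprodM xs ys.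
Qed.

Lemma pi_inv x : pi (uprod_inv x) = ult_inv (pi x).
Proof. by apply/eq_pi; apply: filterS (repr_pi x) => s /= xs; rewrite /uprod_inv xs. Qed.

Local Ltac quotient_elim := repeat (elim/(@quotW _ ultraproduct) => ?).

Lemma ult_addA : associative ult_add.
Proof. by quotient_elim; rewrite -!pi_add addrA. Qed.
Lemma ult_addC : commutative ult_add.
Proof. by quotient_elim; rewrite -!pi_add addrC. Qed.
Lemma ult_add0 : left_id (pi 0) ult_add.
Proof. by quotient_elim; rewrite -pi_add add0r. Qed.
Lemma ult_addN : left_inverse (pi 0) ult_opp ult_add.
Proof. by quotient_elim; rewrite -pi_opp -pi_add addNr. Qed.
HB.instance Definition _ :=
  GRing.isZmodule.Build ultraproduct ult_addA ult_addC ult_add0 ult_addN.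

Lemma ult_mulA : associative ult_mul.
Proof. by quotient_elim; rewrite -!pi_mul mulrA. Qed.
Lemma ult_mulC : commutative ult_mul.
Proof. by quotient_elim; rewrite -!pi_mul mulrC. Qed.
Lemma ult_mul1 : left_id (pi 1) ult_mul.
Proof. by quotient_elim; rewrite -pi_mul mul1r. Qed.
Lemma ult_mulDl : left_distributive ult_mul ult_add.
Proof. by quotient_elim; rewrite -pi_add -!pi_mul -pi_add mulrDl. Qed.
Lemma ult_one_neq0 : pi 1 != pi 0.
Proof. by apply/eqP => /eq_pi/filter_ex[s /= /eqP]; rewrite oner_eq0. Qed.
HB.instance Definition _ := GRing.Zmodule_isComNzRing.Build ultraproduct
  ult_mulA ult_mulC ult_mul1 ult_mulDl ult_one_neq0.

Definition to_ultra (x : uprod) : ultraproduct := pi x.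
Lemma to_ultra_zmod : zmod_morphism to_ultra.
Proof. by move=> x y; rewrite /to_ultra pi_add pi_opp. Qed.
Lemma to_ultra_monoid : monoid_morphism to_ultra.
Proof. by split=> // x y; rewrite /to_ultra pi_mul. Qed.
HB.instance Definition _ :=
  GRing.isZmodMorphism.Build uprod ultraproduct to_ultra to_ultra_zmod.
HB.instance Definition _ :=
  GRing.isMonoidMorphism.Build uprod ultraproduct to_ultra to_ultra_monoid.

Lemma ult_mulVf (a : ultraproduct) : a != 0 -> ult_inv a * a = 1.
Proof.
elim/quotW: a => x x_neq0; rewrite -pi_inv.
change (to_ultra (uprod_inv x) * to_ultra x = to_ultra 1); rewrite -rmorphM.
apply/eq_pi; have [x0|] := in_ultra_setVsetC [set s | x s = 0] ultra_ultrafilter.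
  by case/eqP: x_neq0; apply/eq_pi.
by apply: filterS => s /= /eqP xs; apply: mulVf.
Qed.

Lemma ult_inv0 : ult_inv 0 = 0.
Proof. by rewrite -pi_inv; apply/eq_pi; apply: filterE => s; apply: invr0. Qed.
HB.instance Definition _ := GRing.ComNzRing_isField.Build ultraproduct ult_mulVf ult_inv0.

Lemma ultraproduct_closed : GRing.closed_field_axiom ultraproduct.
Proof.
move=> n P n_gt0; pose c s i := uproj s (repr (P i)).
have root s : {x | x ^+ n = \sum_(i < n) c s i * x ^+ i}.
  exact: sig_eqW (solve_monicpoly (c s) n_gt0).
pose x : uprod := fun s => sval (root s).
exists (to_ultra x); rewrite -rmorphXn.
rewrite (eq_bigr (fun i : 'I_n => to_ultra (repr (P i) * x ^+ i))); last first.
  by move=> i _; rewrite rmorphM rmorphXn; congr (_ * _); apply/esym/reprK.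
rewrite -rmorph_sum; apply/eq_pi; apply: filterE => s /=.
rewrite -[LHS]/(uproj s _) rmorphXn (svalP (root s)) -[RHS]/(uproj s _) rmorph_sum.
by apply: eq_bigr => i _; rewrite rmorphM rmorphXn.
Qed.
HB.instance Definition _ := Field_isAlgClosed.Build ultraproduct ultraproduct_closed.

(* Junk value 0 when c is outside the subfield generated by s; the lists s
   containing c form a set of the ultrafilter, so this is harmless. *)
Definition embed_at (s : seq k) (c : k) : closure_gen s :=
  oapp (closure_gen_embedding s) 0 (insub c : option (gen_subfield s)).

Lemma embed_atE s c (cs : c \in field_gen s) :
  embed_at s c = closure_gen_embedding s (Sub c cs).
Proof. by rewrite /embed_at insubT. Qed.

Definition ultra_embedding (c : k) : ultraproduct := to_ultra (fun s => embed_at s c).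

Lemma ultra_embedding_zmod : zmod_morphism ultra_embedding.
Proof.
move=> c d; rewrite /ultra_embedding -rmorphB; apply/eq_pi.
apply: (@ultra_superset [:: c; d]) => s sub /=.
have cs : c \in field_gen s by apply/mem_field_gen/sub; rewrite inE eqxx.
have ds : d \in field_gen s by apply/mem_field_gen/sub; rewrite !inE eqxx orbT.
rewrite uprodD uprodN (embed_atE cs) (embed_atE ds) (embed_atE (rpredB cs ds)).
by rewrite -rmorphB; congr (_ _); apply: val_inj.
Qed.

Lemma ultra_embedding_monoid : monoid_morphism ultra_embedding.
Proof.
split=> [|c d]; rewrite /ultra_embedding -?rmorph1 -?rmorphM; apply/eq_pi.
  apply: filterE => s /=; rewrite (embed_atE (rpred1 _)) -[RHS]/(1 : closure_gen s).
  rewrite -(rmorph1 (closure_gen_embedding s)).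
  by congr (_ _); apply: val_inj.
apply: (@ultra_superset [:: c; d]) => s sub /=.
have cs : c \in field_gen s by apply/mem_field_gen/sub; rewrite inE eqxx.
have ds : d \in field_gen s by apply/mem_field_gen/sub; rewrite !inE eqxx orbT.
rewrite uprodM (embed_atE cs) (embed_atE ds) (embed_atE (rpredM cs ds)).
by rewrite -rmorphM; congr (_ _); apply: val_inj.
Qed.

HB.instance Definition _ :=
  GRing.isZmodMorphism.Build k ultraproduct ultra_embedding ultra_embedding_zmod.
HB.instance Definition _ :=
  GRing.isMonoidMorphism.Build k ultraproduct ultra_embedding ultra_embedding_monoid.
End Ultraproduct.

Lemma natf_neq0_char0 (L : fieldType) (n : nat) :
  [pchar L] =i pred0 -> n != 0%N -> n%:R != 0 :> L.
Proof. by move=> L0 n0; rewrite ((pcharf0P L).1 L0). Qed.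

Section UVSystem.
Variables (L : fieldType) (b1 b2 b3 K1 K2 : L).

Definition uv_system (U V : L) : Prop :=
  [/\ K1 * U ^+ 2 * V = (b1 + b2 * U) ^+ 2, K2 * U * V ^+ 2 = (b1 + b3 * V) ^+ 2
    & 3%:R * b1 + b2 * U + b3 * V = 0].

Definition delta : L :=
  b2^+4 * b3^+5 * K1 + 8%:R * b1 * b2^+2 * b3^+4 * K1^+2
  + 16%:R * b1^+2 * b3^+3 * K1^+3 + b2^+5 * b3^+4 * K2
  + 15%:R * b1 * b2^+3 * b3^+3 * K1 * K2
  + 12%:R * b1^+2 * b2 * b3^+2 * K1^+2 * K2
  + 8%:R * b1 * b2^+4 * b3^+2 * K2^+2
  + 12%:R * b1^+2 * b2^+2 * b3 * K1 * K2^+2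
  + 27%:R * b1^+3 * K1^+2 * K2^+2
  + 16%:R * b1^+2 * b2^+3 * K2^+3.

Lemma uv_system_neq0 U V : b1 != 0 -> uv_system U V -> U != 0 /\ V != 0.
Proof.
move=> b1_neq0 [eU eV _]; split; apply/eqP => z.
  have : (b1 + b2 * U) ^+ 2 = 0 by rewrite -eU z; ring.
  by rewrite z mulr0 addr0 => /eqP; rewrite expf_eq0 (negbTE b1_neq0).
have : (b1 + b3 * V) ^+ 2 = 0 by rewrite -eV z; ring.
by rewrite z mulr0 addr0 => /eqP; rewrite expf_eq0 (negbTE b1_neq0).
Qed.

Lemma delta_eq0 U V : U != 0 -> V != 0 -> uv_system U V -> delta = 0.
Proof.
move=> U_neq0 V_neq0 [eU eV e3].
have eb3 : b3 = - (3%:R * b1 + b2 * U) / V.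
  by apply/(mulIf V_neq0); rewrite divfK // -[LHS]subr0 -e3; ring.
have eK1 : K1 = (b1 + b2 * U) ^+ 2 / (U ^+ 2 * V).
  by rewrite -eU; field; rewrite U_neq0 V_neq0.
have eK2 : K2 = (b1 + b3 * V) ^+ 2 / (U * V ^+ 2).
  by rewrite -eV; field; rewrite U_neq0 V_neq0.
by rewrite /delta eK1 eK2 eb3; field; rewrite U_neq0 V_neq0.
Qed.

(* With b2 U = - (b1 + P) and b3 V = P - 2 b1 (so that the last equation of
   [uv_system] holds), the first two equations become G1 P = 0 and G2 P = 0. *)
Definition G1 (P : L) : L := K1 * (b1 + P) ^+ 2 * (P - 2%:R * b1) - b2 ^+ 2 * b3 * P ^+ 2.
Definition G2 (P : L) : L :=
  - (K2 * (b1 + P) * (P - 2%:R * b1) ^+ 2) - b2 * b3 ^+ 2 * (P - b1) ^+ 2.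

Definition G2_norm (e1 e2 e3 : L) : L :=
  - (b1^+6 * b2^+3 * b3^+6)
  + - (12%:R * b1^+7 * b2^+2 * b3^+4 * K2)
  + - (48%:R * b1^+8 * b2 * b3^+2 * K2^+2)
  + - (64%:R * b1^+9 * K2^+3)
  + 2%:R * e3 * b1^+3 * b2^+3 * b3^+6
  + - (9%:R * e3 * b1^+4 * b2^+2 * b3^+4 * K2)
  + 48%:R * e3 * b1^+5 * b2 * b3^+2 * K2^+2
  + - (48%:R * e3 * b1^+6 * K2^+3)
  + - (e3^+2 * b2^+3 * b3^+6)
  + 3%:R * e3^+2 * b1 * b2^+2 * b3^+4 * K2
  + - (12%:R * e3^+2 * b1^+2 * b2 * b3^+2 * K2^+2)
  + 15%:R * e3^+2 * b1^+3 * K2^+3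
  + - (e3^+3 * K2^+3)
  + - (2%:R * e2 * b1^+4 * b2^+3 * b3^+6)
  + - (6%:R * e2 * b1^+5 * b2^+2 * b3^+4 * K2)
  + - (16%:R * e2 * b1^+6 * b2 * b3^+2 * K2^+2)
  + - (96%:R * e2 * b1^+7 * K2^+3)
  + 2%:R * e2 * e3 * b1 * b2^+3 * b3^+6
  + - (3%:R * e2 * e3 * b1^+2 * b2^+2 * b3^+4 * K2)
  + 19%:R * e2 * e3 * b1^+3 * b2 * b3^+2 * K2^+2
  + - (12%:R * e2 * e3 * b1^+4 * K2^+3)
  + - (e2 * e3^+2 * b2 * b3^+2 * K2^+2)
  + 3%:R * e2 * e3^+2 * b1 * K2^+3
  + - (e2^+2 * b1^+2 * b2^+3 * b3^+6)
  + - (2%:R * e2^+2 * b1^+3 * b2^+2 * b3^+4 * K2)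
  + - (e2^+2 * b1^+4 * b2 * b3^+2 * K2^+2)
  + - (36%:R * e2^+2 * b1^+5 * K2^+3)
  + 2%:R * e2^+2 * e3 * b1 * b2 * b3^+2 * K2^+2
  + - (e2^+3 * b1^+2 * b2 * b3^+2 * K2^+2)
  + - (4%:R * e2^+3 * b1^+3 * K2^+3)
  + 2%:R * e1 * b1^+5 * b2^+3 * b3^+6
  + 16%:R * e1 * b1^+6 * b2^+2 * b3^+4 * K2
  + 32%:R * e1 * b1^+7 * b2 * b3^+2 * K2^+2
  + - (2%:R * e1 * e3 * b1^+2 * b2^+3 * b3^+6)
  + 6%:R * e1 * e3 * b1^+3 * b2^+2 * b3^+4 * K2
  + - (38%:R * e1 * e3 * b1^+4 * b2 * b3^+2 * K2^+2)
  + 72%:R * e1 * e3 * b1^+5 * K2^+3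
  + - (e1 * e3^+2 * b2^+2 * b3^+4 * K2)
  + 2%:R * e1 * e3^+2 * b1 * b2 * b3^+2 * K2^+2
  + - (9%:R * e1 * e3^+2 * b1^+2 * K2^+3)
  + 2%:R * e1 * e2 * b1^+3 * b2^+3 * b3^+6
  + 5%:R * e1 * e2 * b1^+4 * b2^+2 * b3^+4 * K2
  + 48%:R * e1 * e2 * b1^+6 * K2^+3
  + 2%:R * e1 * e2 * e3 * b1 * b2^+2 * b3^+4 * K2
  + - (3%:R * e1 * e2 * e3 * b1^+2 * b2 * b3^+2 * K2^+2)
  + 12%:R * e1 * e2 * e3 * b1^+3 * K2^+3
  + - (e1 * e2^+2 * b1^+2 * b2^+2 * b3^+4 * K2)
  + - (e1 * e2^+2 * b1^+3 * b2 * b3^+2 * K2^+2)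
  + 12%:R * e1 * e2^+2 * b1^+4 * K2^+3
  + - (e1^+2 * b1^+4 * b2^+3 * b3^+6)
  + - (5%:R * e1^+2 * b1^+5 * b2^+2 * b3^+4 * K2)
  + 8%:R * e1^+2 * b1^+6 * b2 * b3^+2 * K2^+2
  + 48%:R * e1^+2 * b1^+7 * K2^+3
  + - (2%:R * e1^+2 * e3 * b1^+2 * b2^+2 * b3^+4 * K2)
  + 2%:R * e1^+2 * e3 * b1^+3 * b2 * b3^+2 * K2^+2
  + - (24%:R * e1^+2 * e3 * b1^+4 * K2^+3)
  + 2%:R * e1^+2 * e2 * b1^+3 * b2^+2 * b3^+4 * K2
  + 8%:R * e1^+2 * e2 * b1^+4 * b2 * b3^+2 * K2^+2
  + - (e1^+3 * b1^+4 * b2^+2 * b3^+4 * K2)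
  + - (8%:R * e1^+3 * b1^+5 * b2 * b3^+2 * K2^+2)
  + - (16%:R * e1^+3 * b1^+6 * K2^+3).

Lemma G2_prod r1 r2 r3 : G2 r1 * G2 r2 * G2 r3 =
  G2_norm (r1 + r2 + r3) (r1 * r2 + r1 * r3 + r2 * r3) (r1 * r2 * r3).
Proof. rewrite /G2 /G2_norm; ring. Qed.

Lemma G2_norm_G1 : K1 != 0 ->
  K1 ^+ 3 * G2_norm (b2 ^+ 2 * b3 / K1) (- (3%:R * b1 ^+ 2)) (2%:R * b1 ^+ 3) =
  - (b1 ^+ 4 * b2 ^+ 3 * b3 ^+ 3 * delta).
Proof. by move=> K1_neq0; rewrite /G2_norm /delta; field. Qed.

Lemma uv_system_of_common_root P : b2 != 0 -> b3 != 0 ->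
  G1 P = 0 -> G2 P = 0 -> uv_system (- (b1 + P) / b2) ((P - 2%:R * b1) / b3).
Proof.
move=> b2_neq0 b3_neq0 /eqP; rewrite subr_eq0 => /eqP g1 /eqP; rewrite subr_eq0 => /eqP g2.
split; last by field; rewrite b2_neq0 b3_neq0.
- transitivity (K1 * (b1 + P) ^+ 2 * (P - 2%:R * b1) / (b2 ^+ 2 * b3)).
    by field; rewrite b2_neq0 b3_neq0.
  by rewrite g1; field; rewrite b2_neq0 b3_neq0.
- transitivity (- (K2 * (b1 + P) * (P - 2%:R * b1) ^+ 2) / (b2 * b3 ^+ 2)).
    by field; rewrite b2_neq0 b3_neq0.
  by rewrite g2; field; rewrite b2_neq0 b3_neq0.
Qed.
End UVSystem.

Lemma delta_sym (L : fieldType) (b1 b2 b3 K1 K2 : L) :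
  delta b1 b3 b2 K2 K1 = delta b1 b2 b3 K1 K2.
Proof. rewrite /delta; ring. Qed.

Lemma uv_system_sym (L : fieldType) (b1 b2 b3 K1 K2 U V : L) :
  uv_system b1 b3 b2 K2 K1 V U -> uv_system b1 b2 b3 K1 K2 U V.
Proof. by case=> eV eU e3; split; rewrite -?eU -?eV -?e3; ring. Qed.

Section ClosedFieldRoots.
Variable L : closedFieldType.

Lemma exists_root_cubic (c0 c1 c2 : L) : exists x, x ^+ 3 = c0 + c1 * x + c2 * x ^+ 2.
Proof.
have [x ex] := @solve_monicpoly L 3 (nth 0 [:: c0; c1; c2]) isT.
by exists x; rewrite ex !big_ord_recl big_ord0 /=; ring.
Qed.

Lemma exists_root_quadratic (c0 c1 : L) : exists x, x ^+ 2 = c0 + c1 * x.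
Proof.
have [x ex] := @solve_monicpoly L 2 (nth 0 [:: c0; c1]) isT.
by exists x; rewrite ex !big_ord_recl big_ord0 /=; ring.
Qed.

Lemma exists_root_pow5 (c : L) : exists x, x ^+ 5 = c.
Proof.
have [x ex] := @solve_monicpoly L 5 (nth 0 [:: c]) isT.
by exists x; rewrite ex !big_ord_recl big_ord0 /=; ring.
Qed.

Lemma cubic_vieta (e1 e2 e3 : L) : exists r1 r2 r3,
  [/\ r1 + r2 + r3 = e1, r1 * r2 + r1 * r3 + r2 * r3 = e2 & r1 * r2 * r3 = e3].
Proof.
have [r1 er1] := exists_root_cubic e3 (- e2) e1.
have [r2 er2] := exists_root_quadratic (- (r1 ^+ 2 - e1 * r1 + e2)) (e1 - r1).
by exists r1, r2, (e1 - r1 - r2); split; [ring | ring: er2 | ring: er1 er2].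
Qed.
End ClosedFieldRoots.

Section UVSystemSolvable.
Variables (L : closedFieldType) (b1 b2 b3 K1 K2 : L).
Hypotheses (L_char0 : [pchar L] =i pred0)
  (b1_neq0 : b1 != 0) (K1_neq0 : K1 != 0) (K2_neq0 : K2 != 0).
Let natf_neq0 n : n != 0%N -> n%:R != 0 :> L := natf_neq0_char0 L_char0.

Lemma uv_system_b2_eq0 : b2 = 0 -> delta b1 b2 b3 K1 K2 = 0 ->
  exists U V, uv_system b1 b2 b3 K1 K2 U V.
Proof.
move=> b2_eq0; have -> : delta b1 b2 b3 K1 K2 =
    b1 ^+ 2 * K1 ^+ 2 * (16%:R * b3 ^+ 3 * K1 + 27%:R * b1 * K2 ^+ 2).
  by rewrite /delta b2_eq0; ring.
move=> /eqP; rewrite mulf_eq0 mulf_eq0 !expf_eq0 (negbTE b1_neq0) (negbTE K1_neq0).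
rewrite addr_eq0 => /eqP eK1.
have b3_neq0 : b3 != 0.
  apply/eqP => b3_0; move/eqP: eK1; rewrite b3_0 expr0n mulr0 mul0r eq_sym oppr_eq0.
  by apply/negP; rewrite !mulf_neq0 ?expf_neq0 ?natf_neq0.
have n9 : 9%:R != 0 :> L by apply: natf_neq0.
exists (4%:R * b3 ^+ 2 / (9%:R * K2)), (- (3%:R * b1) / b3); split.
- have n16 : 16%:R != 0 :> L by apply: natf_neq0.
  have -> : K1 = - (27%:R * b1 * K2 ^+ 2) / (16%:R * b3 ^+ 3).
    by rewrite -eK1; field; rewrite n16 b3_neq0.
  by rewrite b2_eq0; field; rewrite n16 b3_neq0 n9 K2_neq0.
- by field; rewrite b3_neq0 n9 K2_neq0.
- by rewrite b2_eq0 mul0r addr0 [b3 * _]mulrC divfK // addrN.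
Qed.

Lemma exists_G1_G2_root : b2 != 0 -> b3 != 0 -> delta b1 b2 b3 K1 K2 = 0 ->
  exists P, G1 b1 b2 b3 K1 P = 0 /\ G2 b1 b2 b3 K2 P = 0.
Proof.
move=> b2_neq0 b3_neq0 delta0.
have [r1 [r2 [r3 [s1 s2 s3]]]] :=
  cubic_vieta (b2 ^+ 2 * b3 / K1) (- (3%:R * b1 ^+ 2)) (2%:R * b1 ^+ 3).
have G1_roots P : G1 b1 b2 b3 K1 P = K1 * ((P - r1) * (P - r2) * (P - r3)).
  transitivity (K1 * (P ^+ 3 - (r1 + r2 + r3) * P ^+ 2
    + (r1 * r2 + r1 * r3 + r2 * r3) * P - r1 * r2 * r3)); last by ring.
  by rewrite s1 s2 s3 /G1; field.
have : K1 ^+ 3 * (G2 b1 b2 b3 K2 r1 * G2 b1 b2 b3 K2 r2 * G2 b1 b2 b3 K2 r3) = 0.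
  by rewrite G2_prod s1 s2 s3 G2_norm_G1 // delta0 !mulr0 oppr0.
move/eqP; rewrite mulf_eq0 (negbTE (expf_neq0 3 K1_neq0)) /= !mulf_eq0 -orbA.
move=> /or3P[] /eqP G2_0.
- by exists r1; rewrite G1_roots; split=> //; ring.
- by exists r2; rewrite G1_roots; split=> //; ring.
- by exists r3; rewrite G1_roots; split=> //; ring.
Qed.
End UVSystemSolvable.

Lemma uv_system_solvable (L : closedFieldType) (b1 b2 b3 K1 K2 : L) :
  [pchar L] =i pred0 -> b1 != 0 -> K1 != 0 -> K2 != 0 ->
  delta b1 b2 b3 K1 K2 = 0 -> exists U V, uv_system b1 b2 b3 K1 K2 U V.
Proof.
move=> L0 b1_neq0 K1_neq0 K2_neq0 delta0.
have [b2_0|b2_neq0] := eqVneq b2 0; first exact: uv_system_b2_eq0.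
have [b3_0|b3_neq0] := eqVneq b3 0.
  have delta0' : delta b1 b3 b2 K2 K1 = 0 by rewrite delta_sym.
  have [V [U sys]] := uv_system_b2_eq0 L0 b1_neq0 K2_neq0 K1_neq0 b3_0 delta0'.
  by exists U, V; apply: uv_system_sym.
have [P [G1_0 G2_0]] := exists_G1_G2_root K1_neq0 b2_neq0 b3_neq0 delta0.
by do 2!eexists; apply: uv_system_of_common_root G1_0 G2_0.
Qed.

Section CubicGradient.
Variables (L : fieldType) (b1 b2 b3 b4 b5 b6 b7 : L).

Definition cubic (y0 y1 y2 y3 y4 : L) : L :=
  b1 * y0 ^+ 3 + b2 * (y0 * y1 * y4) + b3 * (y0 * y2 * y3)
  + b4 * (y1 ^+ 2 * y3) + b5 * (y1 * y2 ^+ 2) + b6 * (y2 * y4 ^+ 2) + b7 * (y3 ^+ 2 * y4).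

Definition cubic_d0 (y0 y1 y2 y3 y4 : L) : L :=
  3%:R * b1 * y0 ^+ 2 + b2 * y1 * y4 + b3 * y2 * y3.
Definition cubic_d1 (y0 y1 y2 y3 y4 : L) : L :=
  b2 * y0 * y4 + 2%:R * b4 * y1 * y3 + b5 * y2 ^+ 2.
Definition cubic_d2 (y0 y1 y2 y3 y4 : L) : L :=
  b3 * y0 * y3 + 2%:R * b5 * y1 * y2 + b6 * y4 ^+ 2.
Definition cubic_d3 (y0 y1 y2 y3 y4 : L) : L :=
  b3 * y0 * y2 + b4 * y1 ^+ 2 + 2%:R * b7 * y3 * y4.
Definition cubic_d4 (y0 y1 y2 y3 y4 : L) : L :=
  b2 * y0 * y1 + 2%:R * b6 * y2 * y4 + b7 * y3 ^+ 2.

Definition critical (y0 y1 y2 y3 y4 : L) : Prop :=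
  [/\ cubic_d0 y0 y1 y2 y3 y4 = 0, cubic_d1 y0 y1 y2 y3 y4 = 0,
      cubic_d2 y0 y1 y2 y3 y4 = 0, cubic_d3 y0 y1 y2 y3 y4 = 0
    & cubic_d4 y0 y1 y2 y3 y4 = 0].

Lemma cubic_euler y0 y1 y2 y3 y4 :
  y0 * cubic_d0 y0 y1 y2 y3 y4 + y1 * cubic_d1 y0 y1 y2 y3 y4
  + y2 * cubic_d2 y0 y1 y2 y3 y4 + y3 * cubic_d3 y0 y1 y2 y3 y4
  + y4 * cubic_d4 y0 y1 y2 y3 y4 = 3%:R * cubic y0 y1 y2 y3 y4.
Proof. rewrite /cubic_d0 /cubic_d1 /cubic_d2 /cubic_d3 /cubic_d4 /cubic; ring. Qed.

Lemma critical_scale c y0 y1 y2 y3 y4 : c != 0 ->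
  critical y0 y1 y2 y3 y4 -> critical (y0 / c) (y1 / c) (y2 / c) (y3 / c) (y4 / c).
Proof.
move=> c_neq0 [e0 e1 e2 e3 e4]; have scale (e : L) : e = 0 -> e / c ^+ 2 = 0.
  by move=> ->; rewrite mul0r.
split; [rewrite -(scale _ e0) | rewrite -(scale _ e1) | rewrite -(scale _ e2)
  | rewrite -(scale _ e3) | rewrite -(scale _ e4)];
  by rewrite /cubic_d0 /cubic_d1 /cubic_d2 /cubic_d3 /cubic_d4; field.
Qed.

Lemma critical_coordinate_point : b1 * b4 * b5 * b6 * b7 = 0 ->
  exists y0 y1 y2 y3 y4, [|| y0 != 0, y1 != 0, y2 != 0, y3 != 0 | y4 != 0]
    /\ critical y0 y1 y2 y3 y4.
Proof.
move/eqP; rewrite !mulf_eq0 => /orP[/orP[/orP[/orP[]|]|]|] /eqP b0;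
  [exists 1, 0, 0, 0, 0 | exists 0, 1, 0, 0, 0 | exists 0, 0, 1, 0, 0
  | exists 0, 0, 0, 0, 1 | exists 0, 0, 0, 1, 0];
  rewrite oner_neq0 ?orbT; split=> //; split;
  by rewrite /cubic_d0 /cubic_d1 /cubic_d2 /cubic_d3 /cubic_d4 ?b0; ring.
Qed.

Hypotheses (L_char0 : [pchar L] =i pred0)
  (b4_neq0 : b4 != 0) (b5_neq0 : b5 != 0) (b6_neq0 : b6 != 0) (b7_neq0 : b7 != 0).
Let natf_neq0 n : n != 0%N -> n%:R != 0 :> L := natf_neq0_char0 L_char0.

Lemma critical_x0_eq0 y1 y2 y3 y4 : critical 0 y1 y2 y3 y4 ->
  [/\ y1 = 0, y2 = 0, y3 = 0 & y4 = 0].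
Proof.
case; rewrite /cubic_d1 /cubic_d2 /cubic_d3 /cubic_d4 => _ e1 e2 e3 e4.
have sq_eq0 (c z : L) : c != 0 -> c * z ^+ 2 = 0 -> z = 0.
  by move=> c_neq0 /eqP; rewrite mulf_eq0 (negbTE c_neq0) expf_eq0 => /eqP.
have y12 : y1 = 0 -> y2 = 0 by move=> y1_0; apply: (sq_eq0 _ _ b5_neq0); rewrite -e1 y1_0; ring.
have y24 : y2 = 0 -> y4 = 0 by move=> y2_0; apply: (sq_eq0 _ _ b6_neq0); rewrite -e2 y2_0; ring.
have y43 : y4 = 0 -> y3 = 0 by move=> y4_0; apply: (sq_eq0 _ _ b7_neq0); rewrite -e4 y4_0; ring.
have y31 : y3 = 0 -> y1 = 0 by move=> y3_0; apply: (sq_eq0 _ _ b4_neq0); rewrite -e3 y3_0; ring.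
(* Around the cycle y1, y2, y4, y3 each vanishing coordinate forces the next
   one to vanish, so it suffices that one of them does. *)
have : 15%:R * (b4 * b5 * b6 * b7) * (y1 * y2 * y3 * y4) ^+ 2 = 0.
  transitivity ((b2 * 0 * y4 + 2%:R * b4 * y1 * y3 + b5 * y2 ^+ 2)
      * ((2%:R * b5 * y1 * y2) * (2%:R * b7 * y3 * y4) * (2%:R * b6 * y2 * y4))
    - b5 * y2 ^+ 2 * (b3 * 0 * y3 + 2%:R * b5 * y1 * y2 + b6 * y4 ^+ 2)
      * ((2%:R * b7 * y3 * y4) * (2%:R * b6 * y2 * y4))
    + b5 * y2 ^+ 2 * b6 * y4 ^+ 2 * (b3 * 0 * y2 + b4 * y1 ^+ 2 + 2%:R * b7 * y3 * y4)
      * (2%:R * b6 * y2 * y4)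
    - b5 * y2 ^+ 2 * b6 * y4 ^+ 2 * b4 * y1 ^+ 2
      * (b2 * 0 * y1 + 2%:R * b6 * y2 * y4 + b7 * y3 ^+ 2)); first by ring.
  by rewrite e1 e2 e3 e4; ring.
move/sq_eq0; rewrite !mulf_neq0 ?natf_neq0 // => /(_ isT) /eqP.
rewrite !mulf_eq0 => /orP[/orP[/orP[]|]|] /eqP yi_0.
- by have y2_0 := y12 yi_0; have y4_0 := y24 y2_0; split=> //; apply: y43.
- by have y4_0 := y24 yi_0; have y3_0 := y43 y4_0; split=> //; apply: y31.
- by have y1_0 := y31 yi_0; have y2_0 := y12 y1_0; split=> //; apply: y24.
- by have y3_0 := y43 yi_0; have y1_0 := y31 y3_0; split=> //; apply: y12.
Qed.

Lemma uv_system_of_critical y1 y2 y3 y4 : critical 1 y1 y2 y3 y4 ->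
  uv_system b1 b2 b3 (b4 * b6) (b5 * b7) (y1 * y4) (y2 * y3).
Proof.
case=> e0 e1 e2 e3 e4.
have combination_eq (X Y c1 c2 c3 c4 : L) :
    15%:R * (X - Y) = c1 * y1 * cubic_d1 1 y1 y2 y3 y4 + c2 * y2 * cubic_d2 1 y1 y2 y3 y4
      + c3 * y3 * cubic_d3 1 y1 y2 y3 y4 + c4 * y4 * cubic_d4 1 y1 y2 y3 y4
      + 5%:R * cubic_d0 1 y1 y2 y3 y4 -> X = Y.
  rewrite e0 e1 e2 e3 e4 !mulr0 !addr0 => /eqP.
  by rewrite mulf_eq0 (negbTE (natf_neq0 (isT : 15 != 0)%N)) subr_eq0 => /eqP.
rewrite /cubic_d0 /cubic_d1 /cubic_d2 /cubic_d3 /cubic_d4 in combination_eq.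
have eP : b4 * (y1 ^+ 2 * y3) = - (b1 + b2 * (y1 * y4)).
  by apply: (combination_eq _ _ 8%:R (- 4%:R) (- 1) 2%:R); ring.
have eR : b6 * (y2 * y4 ^+ 2) = - (b1 + b2 * (y1 * y4)).
  by apply: (combination_eq _ _ 2%:R (- 1) (- 4%:R) 8%:R); ring.
have eQ : b5 * (y1 * y2 ^+ 2) = - (b1 + b3 * (y2 * y3)).
  by apply: (combination_eq _ _ (- 1) 8%:R 2%:R (- 4%:R)); ring.
have eS : b7 * (y3 ^+ 2 * y4) = - (b1 + b3 * (y2 * y3)).
  by apply: (combination_eq _ _ (- 4%:R) 2%:R 8%:R (- 1)); ring.
split.
- transitivity (b4 * (y1 ^+ 2 * y3) * (b6 * (y2 * y4 ^+ 2))); first by ring.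
  by rewrite eP eR; ring.
- transitivity (b5 * (y1 * y2 ^+ 2) * (b7 * (y3 ^+ 2 * y4))); first by ring.
  by rewrite eQ eS; ring.
- by rewrite -e0 /cubic_d0; ring.
Qed.

Hypothesis b1_neq0 : b1 != 0.

Lemma delta_eq0_of_critical y0 y1 y2 y3 y4 :
  [|| y0 != 0, y1 != 0, y2 != 0, y3 != 0 | y4 != 0] -> critical y0 y1 y2 y3 y4 ->
  delta b1 b2 b3 (b4 * b6) (b5 * b7) = 0.
Proof.
move=> y_neq0 crit; have [y0_0|y0_neq0] := eqVneq y0 0.
  move: crit; rewrite y0_0 => /critical_x0_eq0[y1_0 y2_0 y3_0 y4_0].
  by move: y_neq0; rewrite y0_0 y1_0 y2_0 y3_0 y4_0 eqxx.
have := critical_scale y0_neq0 crit; rewrite divff // => /uv_system_of_critical sys.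
have [U_neq0 V_neq0] := uv_system_neq0 b1_neq0 sys.
exact: delta_eq0 U_neq0 V_neq0 sys.
Qed.
End CubicGradient.

Lemma critical_of_parametrization (L : closedFieldType) (b1 b2 b3 b4 b5 b6 b7 P U V : L) :
  b4 != 0 -> b5 != 0 -> P != 0 -> b1 - P != 0 -> U != 0 -> V != 0 ->
  b2 = - (b1 + P) / U -> b3 = (P - 2%:R * b1) / V ->
  b6 = P ^+ 2 / (b4 * U ^+ 2 * V) -> b7 = (b1 - P) ^+ 2 / (b5 * U * V ^+ 2) ->
  exists y1 y2 y3 y4, critical b1 b2 b3 b4 b5 b6 b7 1 y1 y2 y3 y4.
Proof.
move=> b4_neq0 b5_neq0 P_neq0 Q_neq0 U_neq0 V_neq0 eb2 eb3 eb6 eb7.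
have [p ep] : exists p, p = P / b4 by eexists.
have [q eq] : exists q, q = (b1 - P) / b5 by eexists.
have p_neq0 : p != 0 by rewrite ep mulf_neq0 ?invr_eq0.
have q_neq0 : q != 0 by rewrite eq mulf_neq0 ?invr_eq0.
have [w ew] := exists_root_pow5 (p ^+ 2 * q / V ^+ 2).
have w_neq0 : w != 0.
  apply/eqP => w0; have : p ^+ 2 * q / V ^+ 2 != 0.
    by rewrite !mulf_neq0 ?expf_neq0 ?invr_eq0 ?expf_neq0.
  by rewrite -ew w0 expr0n eqxx.
exists w, (V * w ^+ 2 / p), (p / w ^+ 2), (U / w); split.
- transitivity (3%:R * b1 + b2 * U + b3 * V).
    by rewrite /cubic_d0; field; rewrite p_neq0 w_neq0.
  by rewrite eb2 eb3; field; rewrite U_neq0 V_neq0.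
- transitivity ((b2 * U + 2%:R * b4 * p + b5 * V ^+ 2 * w ^+ 5 / p ^+ 2) / w).
    by rewrite /cubic_d1; field; rewrite p_neq0 w_neq0.
  rewrite ew eb2 ep eq; field.
  by rewrite V_neq0 b5_neq0 b4_neq0 P_neq0 U_neq0 w_neq0.
- transitivity ((b3 * p + 2%:R * b5 * V * w ^+ 5 / p + b6 * U ^+ 2) / w ^+ 2).
    by rewrite /cubic_d2; field; rewrite p_neq0 w_neq0.
  rewrite ew eb3 eb6 ep eq; field.
  by rewrite V_neq0 b5_neq0 b4_neq0 P_neq0 U_neq0 w_neq0.
- transitivity ((b3 * V * w ^+ 5 / p + b4 * w ^+ 5 + 2%:R * b7 * p * U) / w ^+ 3).
    by rewrite /cubic_d3; field; rewrite p_neq0 w_neq0.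
  rewrite ew eb3 eb7 ep eq; field.
  by rewrite V_neq0 b5_neq0 b4_neq0 P_neq0 U_neq0 w_neq0.
- transitivity ((b2 * w ^+ 5 + 2%:R * b6 * V * U * w ^+ 5 / p + b7 * p ^+ 2) / w ^+ 4).
    by rewrite /cubic_d4; field; rewrite p_neq0 w_neq0.
  rewrite ew eb2 eb6 eb7 ep eq; field.
  by rewrite V_neq0 b5_neq0 b4_neq0 P_neq0 U_neq0 w_neq0.
Qed.

Lemma critical_of_uv_system (L : closedFieldType) (b1 b2 b3 b4 b5 b6 b7 U V : L) :
  b4 != 0 -> b5 != 0 -> b6 != 0 -> b7 != 0 -> U != 0 -> V != 0 ->
  uv_system b1 b2 b3 (b4 * b6) (b5 * b7) U V ->
  exists y1 y2 y3 y4, critical b1 b2 b3 b4 b5 b6 b7 1 y1 y2 y3 y4.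
Proof.
move=> b4_neq0 b5_neq0 b6_neq0 b7_neq0 U_neq0 V_neq0 [eU eV e3].
have eP : b1 + b2 * U = - (- (b1 + b2 * U)) by rewrite opprK.
have eQ : b1 + b3 * V = - (b1 - - (b1 + b2 * U)) by rewrite -[LHS]subr0 -e3; ring.
apply: (@critical_of_parametrization _ _ _ _ _ _ _ _ (- (b1 + b2 * U)) U V) => //.
- apply/eqP => P0; have : b4 * b6 * U ^+ 2 * V != 0 by rewrite !mulf_neq0 ?expf_neq0.
  by rewrite eU eP P0 oppr0 expr0n eqxx.
- apply/eqP => Q0; have : b5 * b7 * U * V ^+ 2 != 0 by rewrite !mulf_neq0 ?expf_neq0.
  by rewrite eV eQ Q0 oppr0 expr0n eqxx.
- by field.
- by apply: (mulIf V_neq0); rewrite divfK // -[LHS]subr0 -e3; ring.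
- by rewrite sqrrN -eU; field; rewrite b4_neq0 U_neq0 V_neq0.
- by rewrite -sqrrN -eQ -eV; field; rewrite b5_neq0 U_neq0 V_neq0.
Qed.

Lemma mderivX_inord (R : comNzRingType) (n i j : nat) : (i <= n)%N -> (j <= n)%N ->
  ('X_(inord j) : {mpoly R[n.+1]})^`M(inord i) = (j == i)%:R.
Proof.
move=> i_le j_le; rewrite mderivX mnm1E.
have -> : (@inord n j == inord i) = (j == i) by rewrite -val_eqE /= !inordK.
case: eqP => [->|_] /=; last by rewrite scale0r.
have -> : (U_(@inord n i) - U_(@inord n i))%MM = 0%MM.
  by apply/mnmP => l; rewrite mnmBE mnm0E subnn.
by rewrite mpolyX0 scale1r.
Qed.

Section FaEvaluation.
Variables (k L : fieldType) (f : {rmorphism k -> L}) (x : 'I_5 -> L).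

Definition ev (p : {mpoly k[5]}) : L := (map_mpoly f p).@[x].

Lemma ev0 : ev 0 = 0. Proof. by rewrite /ev rmorph0 meval0. Qed.
Lemma ev1 : ev 1 = 1. Proof. by rewrite /ev rmorph1 meval1. Qed.
Lemma evD p q : ev (p + q) = ev p + ev q. Proof. by rewrite /ev rmorphD mevalD. Qed.
Lemma evM p q : ev (p * q) = ev p * ev q. Proof. by rewrite /ev rmorphM mevalM. Qed.
Lemma evZ c p : ev (c *: p) = f c * ev p. Proof. by rewrite /ev map_mpolyZ mevalZ. Qed.
Lemma evX i : ev (Xv i) = x i. Proof. by rewrite /ev /Xv map_mpolyX mevalXU. Qed.

Variables a1 a2 a3 a4 a5 a6 a7 : k.
Local Notation F := (Fa a1 a2 a3 a4 a5 a6 a7).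
Local Notation x_ i := (x (@inord 4 i)).
Local Notation b1 := (f a1). Local Notation b2 := (f a2). Local Notation b3 := (f a3).
Local Notation b4 := (f a4). Local Notation b5 := (f a5). Local Notation b6 := (f a6).
Local Notation b7 := (f a7).

Lemma ev_Fa : ev F = cubic b1 b2 b3 b4 b5 b6 b7 (x_ 0) (x_ 1) (x_ 2) (x_ 3) (x_ 4).
Proof. by rewrite /Fa /cubic /= !exprS !expr0 !mulr1 !(evD, evM, evZ, evX). Qed.

Local Ltac ev_deriv :=
  rewrite /Fa /= !exprS !expr0 !mulr1 !mderivD !mderivZ !mderivM !mderivX_inord //=;
  rewrite !(evD, evM, evZ, evX, ev0, ev1); ring.

Lemma ev_Fa_deriv0 : ev (F^`M(inord 0)) = cubic_d0 b1 b2 b3 (x_ 0) (x_ 1) (x_ 2) (x_ 3) (x_ 4).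
Proof. rewrite /cubic_d0; ev_deriv. Qed.
Lemma ev_Fa_deriv1 : ev (F^`M(inord 1)) = cubic_d1 b2 b4 b5 (x_ 0) (x_ 1) (x_ 2) (x_ 3) (x_ 4).
Proof. rewrite /cubic_d1; ev_deriv. Qed.
Lemma ev_Fa_deriv2 : ev (F^`M(inord 2)) = cubic_d2 b3 b5 b6 (x_ 0) (x_ 1) (x_ 2) (x_ 3) (x_ 4).
Proof. rewrite /cubic_d2; ev_deriv. Qed.
Lemma ev_Fa_deriv3 : ev (F^`M(inord 3)) = cubic_d3 b3 b4 b7 (x_ 0) (x_ 1) (x_ 2) (x_ 3) (x_ 4).
Proof. rewrite /cubic_d3; ev_deriv. Qed.
Lemma ev_Fa_deriv4 : ev (F^`M(inord 4)) = cubic_d4 b2 b6 b7 (x_ 0) (x_ 1) (x_ 2) (x_ 3) (x_ 4).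
Proof. rewrite /cubic_d4; ev_deriv. Qed.
End FaEvaluation.

Lemma ord5_forall (P : 'I_5 -> Prop) :
  P (inord 0) -> P (inord 1) -> P (inord 2) -> P (inord 3) -> P (inord 4) -> forall i, P i.
Proof.
move=> P0 P1 P2 P3 P4 [m m_lt5].
have -> : Ordinal m_lt5 = inord m by apply: val_inj; rewrite /= inordK.
by move: m_lt5; do 5?[case: m => [_|m] //].
Qed.

Definition point5 (L : fieldType) (y0 y1 y2 y3 y4 : L) : 'I_5 -> L :=
  fun i => [:: y0; y1; y2; y3; y4]`_i.

Section SingularPointFa.
Variables (k L : fieldType) (f : {rmorphism k -> L}) (a1 a2 a3 a4 a5 a6 a7 : k).
Variable x : 'I_5 -> L.
Local Notation x_ i := (x (@inord 4 i)).

Lemma singular_point_Fa :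
  singular_point f (Fa a1 a2 a3 a4 a5 a6 a7) x <->
  [/\ [|| x_ 0 != 0, x_ 1 != 0, x_ 2 != 0, x_ 3 != 0 | x_ 4 != 0],
      cubic (f a1) (f a2) (f a3) (f a4) (f a5) (f a6) (f a7)
        (x_ 0) (x_ 1) (x_ 2) (x_ 3) (x_ 4) = 0
    & critical (f a1) (f a2) (f a3) (f a4) (f a5) (f a6) (f a7)
        (x_ 0) (x_ 1) (x_ 2) (x_ 3) (x_ 4)].
Proof.
split=> [[[i xi_neq0] [F0 dF0]]|[x_neq0 F0 [d0 d1 d2 d3 d4]]].
  split; first by move: i xi_neq0; apply: ord5_forall => ->; rewrite ?orbT.
    by rewrite -ev_Fa.
  have dF i : ev f x (Fa a1 a2 a3 a4 a5 a6 a7)^`M(inord i) = 0 := dF0 (inord i).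
  by split; [move: (dF 0%N) | move: (dF 1%N) | move: (dF 2%N) | move: (dF 3%N)
    | move: (dF 4%N)]; rewrite ?ev_Fa_deriv0 ?ev_Fa_deriv1 ?ev_Fa_deriv2
    ?ev_Fa_deriv3 ?ev_Fa_deriv4.
split; first by case/orP: x_neq0 => [|/or4P[]] xi_neq0; eexists; apply: xi_neq0.
split; first exact: etrans (ev_Fa f x a1 a2 a3 a4 a5 a6 a7) F0.
by apply: ord5_forall; rewrite -[_ = 0]/(ev f x _ = 0);
  rewrite ?ev_Fa_deriv0 ?ev_Fa_deriv1 ?ev_Fa_deriv2 ?ev_Fa_deriv3 ?ev_Fa_deriv4.
Qed.
End SingularPointFa.

Lemma Dd_delta (L : fieldType) (b1 b2 b3 b4 b5 b6 b7 : L) :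
  Dd b1 b2 b3 b4 b5 b6 b7 = b1 * b4 * b5 * b6 * b7 * delta b1 b2 b3 (b4 * b6) (b5 * b7).
Proof. rewrite /Dd /Delta /delta; ring. Qed.

Lemma rmorph_Dd (k L : fieldType) (f : {rmorphism k -> L}) (a1 a2 a3 a4 a5 a6 a7 : k) :
  f (Dd a1 a2 a3 a4 a5 a6 a7) = Dd (f a1) (f a2) (f a3) (f a4) (f a5) (f a6) (f a7).
Proof. by rewrite /Dd /Delta !(rmorphD, rmorphM, rmorphXn, rmorph_nat). Qed.

Lemma cubic_eq0_of_critical (L : fieldType) (b1 b2 b3 b4 b5 b6 b7 y0 y1 y2 y3 y4 : L) :
  [pchar L] =i pred0 -> critical b1 b2 b3 b4 b5 b6 b7 y0 y1 y2 y3 y4 ->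
  cubic b1 b2 b3 b4 b5 b6 b7 y0 y1 y2 y3 y4 = 0.
Proof.
move=> L0 [e0 e1 e2 e3 e4]; apply: (mulfI (natf_neq0_char0 L0 (isT : 3 != 0)%N)).
by rewrite -cubic_euler e0 e1 e2 e3 e4; ring.
Qed.

Lemma Dd_eq0_of_critical (L : fieldType) (b1 b2 b3 b4 b5 b6 b7 y0 y1 y2 y3 y4 : L) :
  [pchar L] =i pred0 -> [|| y0 != 0, y1 != 0, y2 != 0, y3 != 0 | y4 != 0] ->
  critical b1 b2 b3 b4 b5 b6 b7 y0 y1 y2 y3 y4 -> Dd b1 b2 b3 b4 b5 b6 b7 = 0.
Proof.
move=> L0 y_neq0 crit; rewrite Dd_delta.
have [->|] := eqVneq (b1 * b4 * b5 * b6 * b7) 0; first by rewrite mul0r.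
rewrite !mulf_eq0 !negb_or => /andP[/andP[/andP[/andP[b1_neq0 b4_neq0] b5_neq0] b6_neq0] b7_neq0].
by rewrite (delta_eq0_of_critical L0 b4_neq0 b5_neq0 b6_neq0 b7_neq0 b1_neq0 y_neq0 crit) mulr0.
Qed.

Lemma critical_of_Dd_eq0 (L : closedFieldType) (b1 b2 b3 b4 b5 b6 b7 : L) :
  [pchar L] =i pred0 -> Dd b1 b2 b3 b4 b5 b6 b7 = 0 ->
  exists y0 y1 y2 y3 y4, [|| y0 != 0, y1 != 0, y2 != 0, y3 != 0 | y4 != 0]
    /\ critical b1 b2 b3 b4 b5 b6 b7 y0 y1 y2 y3 y4.
Proof.
move=> L0; have [coef0 _|coef_neq0] := eqVneq (b1 * b4 * b5 * b6 * b7) 0.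
  exact: critical_coordinate_point.
rewrite Dd_delta => /eqP; rewrite mulf_eq0 (negbTE coef_neq0) => /eqP delta0.
move: coef_neq0; rewrite !mulf_eq0 !negb_or.
move=> /andP[/andP[/andP[/andP[b1_neq0 b4_neq0] b5_neq0] b6_neq0] b7_neq0].
have [U [V sys]] :=
  uv_system_solvable L0 b1_neq0 (mulf_neq0 b4_neq0 b6_neq0) (mulf_neq0 b5_neq0 b7_neq0) delta0.
have [U_neq0 V_neq0] := uv_system_neq0 b1_neq0 sys.
have [y1 [y2 [y3 [y4 crit]]]] :=
  critical_of_uv_system b4_neq0 b5_neq0 b6_neq0 b7_neq0 U_neq0 V_neq0 sys.
by exists 1, y1, y2, y3, y4; rewrite oner_neq0.
Qed.

Theorem lemma1p1 (k : fieldType)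
  (hchar : [pchar k] =i pred0)
  (hzeta : exists z : k, 5.-primitive_root z)
  (a1 a2 a3 a4 a5 a6 a7 : k) :
  smooth_hypersurface (Fa a1 a2 a3 a4 a5 a6 a7) <-> Dd a1 a2 a3 a4 a5 a6 a7 != 0.
Proof.
have char0 (L : fieldType) (f : {rmorphism k -> L}) : [pchar L] =i pred0.
  by move=> p; rewrite (fmorph_pchar f) hchar.
split=> [smooth | D_neq0 L f x].
  apply/eqP => D0; pose f : {rmorphism k -> ultraproduct k} := @ultra_embedding k.
  have fD0 : Dd (f a1) (f a2) (f a3) (f a4) (f a5) (f a6) (f a7) = 0.
    by rewrite -rmorph_Dd D0 rmorph0.
  have [y0 [y1 [y2 [y3 [y4 [y_neq0 crit]]]]]] := critical_of_Dd_eq0 (char0 _ f) fD0.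
  apply: (smooth _ f (point5 y0 y1 y2 y3 y4)); apply/singular_point_Fa.
  rewrite /point5 !inordK //; split=> //.
  exact: cubic_eq0_of_critical (char0 _ f) crit.
case/singular_point_Fa => x_neq0 _ crit.
move: D_neq0; rewrite -(fmorph_eq0 f) rmorph_Dd.
by rewrite (Dd_eq0_of_critical (char0 _ f) x_neq0 crit) eqxx.
Qed.
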